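(* If $r \in \mathbb{Q}_{>1} \setminus \mathbb{N}$, then the set of elasticities $R(S_r)$ is dense in $\mathbb{R}_{\ge 1}$.
   Context: $S_r$ is the additive submonoid of $(\mathbb{Q}_{\ge 0},+)$ generated by $\{r^n : n \in \mathbb{N}_0\}$; for $r \in \mathbb{Q}_{>1}\setminus\mathbb{N}$ it is atomic with atoms $r^n$, $n \in \mathbb{N}_0$. $\mathsf{L}(x)$ denotes the set of lengths of factorizations of $x$ into atoms. The elasticity of $x \ne 0$ is $\rho(x) = \sup \mathsf{L}(x)/\inf \mathsf{L}(x)$, $\rho(0)=1$, and $R(S_r) = \{\rho(x) : x \in S_r\}$. *)

From Stdlib Require Import Reals List.
Import ListNotations.
Open Scope R_scope.

(* A factorization of an element of S_r is a finite multiset of atoms r^k,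
   represented by the list of exponents k.  Its value and its length: *)
Definition fact_value (r : R) (l : list nat) : R :=
  fold_right (fun k acc => r ^ k + acc) 0 l.

Definition in_Sr (r x : R) : Prop := exists l : list nat, fact_value r l = x.

Definition lengths (r x : R) (t : R) : Prop :=
  exists l : list nat, fact_value r l = x /\ t = INR (length l).

Definition is_glb (E : R -> Prop) (s : R) : Prop :=
  (forall y, E y -> s <= y) /\ (forall b, (forall y, E y -> b <= y) -> b <= s).

Definition elasticity_of (r x rho : R) : Prop :=
  (x = 0 /\ rho = 1) \/
  (x <> 0 /\ exists s i : R, is_lub (lengths r x) s /\ is_glb (lengths r x) i
                            /\ rho = s / i).

Definition elasticity_set (r rho : R) : Prop :=
  exists x : R, in_Sr r x /\ elasticity_of r x rho.

From Stdlib Require Import Reals ZArith Lia Lra List Permutation.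
Import ListNotations.
Open Scope R_scope.

(* Write r = p/q in lowest terms, so that 2 <= q < p, and encode a factorization
   by its coefficient vector c (c_k copies of r^k).  Two vectors of the same
   value are related by trades p r^k = q r^(k+1), each changing the length by
   q - p; clearing denominators and using gcd(p, q) = 1 makes this a carry
   argument.  Hence the vector whose coefficients are all < p (the base-r digits)
   has minimum length, and a vector whose coefficients other than the constant
   one are < q has maximum length.  For x = N + r^(j+1) (1 + r + ... + r^(G-1))
   with N < p r^j this gives rho(x) = (N + G) / (s + G), where s <= p (j + 1) is
   the base-r digit sum of N.  Taking G large compared with j and N close to
   (y - 1) G makes the ratio close to y; such j exist because r^j outgrows j. *)

Lemma Forall_repeat {A : Type} (P : A -> Prop) (a : A) (k : nat) :
  P a -> Forall P (repeat a k).
Proof.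
  intro Ha. apply Forall_forall. intros x Hx. apply repeat_spec in Hx. subst. exact Ha.
Qed.

Lemma Forall_removelast {A : Type} (P : A -> Prop) (l : list A) :
  Forall P l -> Forall P (removelast l).
Proof.
  intro H. destruct l as [|a l]; [constructor|].
  rewrite (app_removelast_last a (l := a :: l)) in H by discriminate.
  apply Forall_app in H. tauto.
Qed.

Lemma list_sum_repeat (a k : nat) : list_sum (repeat a k) = (a * k)%nat.
Proof. induction k as [|k IH]; simpl; lia. Qed.

Lemma list_sum_rev (l : list nat) : list_sum (rev l) = list_sum l.
Proof. symmetry. apply Permutation_list_sum, Permutation_rev. Qed.

Lemma list_sum_le_mul_length (b : nat) (l : list nat) :
  Forall (fun x => x < b)%nat l -> (list_sum l <= b * length l)%nat.
Proof. induction 1; simpl; lia. Qed.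

(* A coefficient vector [c] stands for the factorization with [c_k] copies of the
   atom [r ^ k]: its value is [horner r c] and its length is [list_sum c]. *)
Fixpoint horner (r : R) (c : list nat) : R :=
  match c with [] => 0 | a :: c' => INR a + r * horner r c' end.

Fixpoint expand (j : nat) (c : list nat) : list nat :=
  match c with [] => [] | a :: c' => repeat j a ++ expand (S j) c' end.

Fixpoint incr_at (k : nat) (c : list nat) : list nat :=
  match k, c with
  | O, [] => [1%nat]
  | O, a :: c' => S a :: c'
  | S k', [] => 0%nat :: incr_at k' []
  | S k', a :: c' => a :: incr_at k' c'
  end.

Definition coeffs (l : list nat) : list nat := fold_right incr_at [] l.

Definition pad (n : nat) (c : list nat) : list nat := c ++ repeat 0%nat (n - length c).

Section Horner.
Variable r : R.

Lemma fact_value_app (l1 l2 : list nat) :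
  fact_value r (l1 ++ l2) = fact_value r l1 + fact_value r l2.
Proof. induction l1 as [|k l1 IH]; simpl; [ring | rewrite IH; ring]. Qed.

Lemma fact_value_repeat (j a : nat) : fact_value r (repeat j a) = INR a * r ^ j.
Proof.
  induction a as [|a IH]; simpl repeat; [simpl; ring|].
  rewrite S_INR. simpl. rewrite IH. ring.
Qed.

Lemma fact_value_expand (c : list nat) (j : nat) :
  fact_value r (expand j c) = r ^ j * horner r c.
Proof.
  revert j. induction c as [|a c IH]; intro j; simpl; [ring|].
  rewrite fact_value_app, fact_value_repeat, IH. simpl. ring.
Qed.

Lemma length_expand (c : list nat) (j : nat) : length (expand j c) = list_sum c.
Proof.
  revert j. induction c as [|a c IH]; intro j; simpl; [reflexivity|].
  rewrite length_app, repeat_length, IH. reflexivity.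
Qed.

Lemma horner_app (c1 c2 : list nat) :
  horner r (c1 ++ c2) = horner r c1 + r ^ length c1 * horner r c2.
Proof. induction c1 as [|a c1 IH]; simpl; [ring | rewrite IH; ring]. Qed.

Lemma horner_zeros (m : nat) : horner r (repeat 0%nat m) = 0.
Proof. induction m as [|m IH]; simpl; [|rewrite IH]; ring. Qed.

Lemma horner_pad (n : nat) (c : list nat) : horner r (pad n c) = horner r c.
Proof. unfold pad. rewrite horner_app, horner_zeros. ring. Qed.

Lemma length_pad (n : nat) (c : list nat) : (length c <= n)%nat -> length (pad n c) = n.
Proof. intro H. unfold pad. rewrite length_app, repeat_length. lia. Qed.

Lemma list_sum_pad (n : nat) (c : list nat) : list_sum (pad n c) = list_sum c.
Proof. unfold pad. rewrite list_sum_app, list_sum_repeat. lia. Qed.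

Lemma horner_incr_at (k : nat) (c : list nat) :
  horner r (incr_at k c) = horner r c + r ^ k.
Proof.
  revert c. induction k as [|k IH]; intros [|a c]; cbn [incr_at horner pow];
    rewrite ?S_INR, ?IH; cbn [INR horner]; ring.
Qed.

Lemma list_sum_incr_at (k : nat) (c : list nat) :
  list_sum (incr_at k c) = S (list_sum c).
Proof.
  revert c. induction k as [|k IH]; intros [|a c]; simpl; rewrite ?IH; simpl; lia.
Qed.

Lemma horner_coeffs (l : list nat) : horner r (coeffs l) = fact_value r l.
Proof. induction l as [|k l IH]; simpl; [reflexivity|]. rewrite horner_incr_at, IH. ring. Qed.

Lemma list_sum_coeffs (l : list nat) : list_sum (coeffs l) = length l.
Proof.
  induction l as [|k l IH]; simpl; [reflexivity|]. rewrite list_sum_incr_at, IH. reflexivity.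
Qed.

Lemma horner_pos (c : list nat) : 0 < r -> (0 < list_sum c)%nat -> 0 < horner r c.
Proof.
  intros Hr. induction c as [|a c IH]; simpl; [lia|]. intro Hs.
  assert (Hnonneg : 0 <= horner r c).
  { clear IH Hs. induction c as [|b c IHc]; simpl; [lra|]. pose proof (pos_INR b). nra. }
  destruct a as [|a].
  - specialize (IH Hs). simpl. nra.
  - rewrite S_INR. pose proof (pos_INR a). nra.
Qed.

End Horner.

Lemma horner_rev (r : R) (c : list nat) :
  r <> 0 -> horner (/ r) (rev c) * r ^ length c = r * horner r c.
Proof.
  intro Hr. induction c as [|a c IH]; simpl; [ring|].
  rewrite horner_app, length_rev. simpl.
  assert (Hn : / r ^ length c * r ^ length c = 1) by (apply Rinv_l, pow_nonzero, Hr).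
  rewrite pow_inv.
  transitivity (r * (horner (/ r) (rev c) * r ^ length c)
                + INR a * r * (/ r ^ length c * r ^ length c)); [ring|].
  rewrite IH, Hn. ring.
Qed.

Lemma coprime_divide_pow_mul (p q m x : nat) :
  Nat.gcd p q = 1%nat -> Nat.divide p (q ^ m * x) -> Nat.divide p x.
Proof.
  intro Hcop. induction m as [|m IH]; intro H.
  - rewrite Nat.pow_0_r, Nat.mul_1_l in H. exact H.
  - apply IH, (Nat.gauss p q); [|exact Hcop].
    replace (q * (q ^ m * x))%nat with (q ^ S m * x)%nat by (simpl; ring). exact H.
Qed.

Section Carry.
Variables (p q : nat) (r : R).
Hypothesis Hrq : r * INR q = INR p.
Hypothesis Hcop : Nat.gcd p q = 1%nat.

Lemma horner_scaled_nat (c : list nat) :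
  exists z : nat, INR q ^ length c * r * horner r c = INR p * INR z.
Proof.
  induction c as [|a c [z Hz]]; cbn [horner length].
  - exists 0%nat. simpl. ring.
  - exists (q ^ length c * a + p * z)%nat.
    rewrite plus_INR, !mult_INR, pow_INR, <- Hz, <- Hrq. simpl. ring.
Qed.

Lemma horner_head_congr (a b : nat) (c d : list nat) :
  length c = length d -> horner r (a :: c) = horner r (b :: d) -> (b < p)%nat ->
  exists t, a = (b + p * t)%nat.
Proof.
  intros Hl Hv Hb.
  destruct (horner_scaled_nat c) as [z1 Hz1], (horner_scaled_nat d) as [z2 Hz2].
  set (m := length d) in *. rewrite Hl in Hz1.
  assert (E : (q ^ m * a + p * z1 = q ^ m * b + p * z2)%nat).
  { apply INR_eq. rewrite !plus_INR, !mult_INR, pow_INR, <- Hz1, <- Hz2.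
    cbn [horner] in Hv.
    transitivity (INR q ^ m * (INR a + r * horner r c)); [ring|].
    rewrite Hv. ring. }
  assert (Hdiv : forall x y zx zy, (q ^ m * x + p * zx = q ^ m * y + p * zy)%nat ->
                 Nat.divide p (x - y)).
  { intros x y zx zy Hxy. apply (coprime_divide_pow_mul p q m _ Hcop).
    exists (zy - zx)%nat. rewrite Nat.mul_sub_distr_l, Nat.mul_sub_distr_r. lia. }
  assert (Hba : (b - a = 0)%nat).
  { destruct (Nat.eq_dec (b - a) 0) as [|Hne]; [assumption|].
    pose proof (Nat.divide_pos_le p (b - a) ltac:(lia) (Hdiv b a z2 z1 (eq_sym E))). lia. }
  destruct (Hdiv a b z1 z2 E) as [t Ht]. exists t. lia.
Qed.

(* Each step trades [p] copies of [r ^ k] for [q] copies of [r ^ (k + 1)];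
   [T] counts the trades. *)
Lemma carry_sum (d c : list nat) :
  length c = length d -> horner r c = horner r d ->
  Forall (fun x => x < p)%nat (removelast d) ->
  exists T, (list_sum c + q * T = list_sum d + p * T)%nat.
Proof.
  revert c. induction d as [|b d IH]; intros [|a c] Hl Hv Hd; try discriminate.
  - exists 0%nat. simpl. lia.
  - destruct d as [|b' d].
    + destruct c; [|discriminate]. cbn [horner] in Hv.
      assert (a = b) by (apply INR_eq; lra). subst. exists 0%nat. lia.
    + change (removelast (b :: b' :: d)) with (b :: removelast (b' :: d)) in Hd.
      apply Forall_cons_iff in Hd as [Hb Hd].
      injection Hl as Hl.
      destruct (horner_head_congr a b c (b' :: d) Hl Hv Hb) as [t Ht].
      destruct c as [|a1 c]; [discriminate|].
      assert (Hr : r <> 0).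
      { intro H0. rewrite H0, Rmult_0_l in Hrq. apply lt_INR in Hb. pose proof (pos_INR b). lra. }
      assert (Hv' : horner r ((a1 + q * t)%nat :: c) = horner r (b' :: d)).
      { apply (Rmult_eq_reg_l r); [|exact Hr].
        subst a. cbn [horner] in *. rewrite !plus_INR, !mult_INR in *.
        transitivity (r * INR q * INR t + r * (INR a1 + r * horner r c)); [ring|].
        rewrite Hrq. lra. }
      destruct (IH ((a1 + q * t)%nat :: c) Hl Hv' Hd) as [T HT].
      exists (T + t)%nat. cbn [list_sum fold_right] in *. nia.
Qed.

End Carry.

Section Extremal.
Variables (p q : nat) (r : R).
Hypothesis Hrq : r * INR q = INR p.
Hypothesis Hcop : Nat.gcd p q = 1%nat.
Hypothesis Hqp : (q <= p)%nat.

Let q_pos : (0 < q)%nat.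
Proof.
  destruct q as [|q']; [|lia].
  rewrite Rmult_0_r in Hrq. replace p with 0%nat in Hcop by (apply INR_eq; simpl; lra).
  discriminate.
Qed.

Lemma horner_min_sum (c d : list nat) :
  length c = length d -> horner r c = horner r d -> Forall (fun x => x < p)%nat d ->
  (list_sum d <= list_sum c)%nat.
Proof.
  intros Hl Hv Hd.
  destruct (carry_sum p q r Hrq Hcop d c Hl Hv (Forall_removelast _ _ Hd)) as [T HT].
  nia.
Qed.

Lemma horner_max_sum (c e : list nat) (b : nat) :
  length c = S (length e) -> horner r c = horner r (b :: e) ->
  Forall (fun x => x < q)%nat e -> (list_sum c <= b + list_sum e)%nat.
Proof.
  intros Hl Hv He.
  (* Read backwards, the vectors are expansions in [/ r = q / p], for which the
     carry changes the length in the opposite direction. *)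
  assert (Hr : r <> 0).
  { intro H0. rewrite H0, Rmult_0_l in Hrq. apply le_INR in Hqp.
    pose proof (lt_0_INR q q_pos). lra. }
  assert (Hsr : / r * INR p = INR q) by (rewrite <- Hrq; field; exact Hr).
  assert (Hcop' : Nat.gcd q p = 1%nat) by (rewrite Nat.gcd_comm; exact Hcop).
  destruct (carry_sum q p (/ r) Hsr Hcop' (rev (b :: e)) (rev c)) as [T HT].
  - rewrite !length_rev. exact Hl.
  - apply (Rmult_eq_reg_r (r ^ length c)); [|apply pow_nonzero, Hr].
    rewrite horner_rev by exact Hr.
    change (S (length e)) with (length (b :: e)) in Hl. rewrite Hl, horner_rev by exact Hr.
    rewrite Hv. reflexivity.
  - simpl rev. rewrite removelast_last. apply Forall_rev, He.
  - rewrite !list_sum_rev in HT. change (list_sum (b :: e)) with (b + list_sum e)%nat in HT.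
    nia.
Qed.

Lemma factorization_length_bounds (d e : list nat) (b : nat) (l : list nat) :
  Forall (fun x => x < p)%nat d -> Forall (fun x => x < q)%nat e ->
  horner r d = horner r (b :: e) -> fact_value r l = horner r d ->
  (list_sum d <= length l <= b + list_sum e)%nat.
Proof.
  intros Hd He Hde Hl.
  set (n := (length (coeffs l) + length d + S (length e))%nat).
  set (zeros := repeat 0%nat (n - length (b :: e))).
  assert (Hc : horner r (pad n (coeffs l)) = horner r d)
    by (rewrite horner_pad, horner_coeffs; exact Hl).
  assert (Hcl : length (pad n (coeffs l)) = n) by (apply length_pad; unfold n; lia).
  rewrite <- list_sum_coeffs, <- (list_sum_pad n (coeffs l)). split.
  - rewrite <- (list_sum_pad n d). apply horner_min_sum.
    + rewrite Hcl, length_pad; unfold n; lia.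
    + rewrite (horner_pad r n d). exact Hc.
    + apply Forall_app. split; [exact Hd | apply Forall_repeat; lia].
  - transitivity (b + list_sum (e ++ zeros))%nat.
    + apply horner_max_sum.
      * unfold zeros. rewrite Hcl, length_app, repeat_length. unfold n. simpl. lia.
      * change (b :: e ++ zeros) with (pad n (b :: e)).
        rewrite (horner_pad r n (b :: e)), Hc. exact Hde.
      * apply Forall_app. split; [exact He | apply Forall_repeat; exact q_pos].
    + unfold zeros. rewrite list_sum_app, list_sum_repeat. lia.
Qed.

End Extremal.

Lemma one_lt_ratio (p q : nat) (r : R) : r * INR q = INR p -> (q < p)%nat -> 1 < r.
Proof.
  intros Hrq Hqp. apply lt_INR in Hqp.
  destruct q as [|q]; [simpl in Hrq, Hqp; lra|].
  pose proof (lt_0_INR (S q) (Nat.lt_0_succ q)). nra.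
Qed.

Section Digits.
Variables (p q : nat) (r : R).
Hypothesis Hrq : r * INR q = INR p.
Hypothesis Hqp : (q < p)%nat.

(* Base-[r] digits of [N], from [N = N mod p + r * (q * (N / p))]; the fuel [N]
   is enough for every digit to be [< p]. *)
Fixpoint digits (fuel N : nat) : list nat :=
  match fuel with
  | O => [N]
  | S f => if (N <? p)%nat then [N] else (N mod p)%nat :: digits f (q * (N / p))
  end.

Lemma horner_digits (f N : nat) : horner r (digits f N) = INR N.
Proof.
  revert N. induction f as [|f IH]; intro N; cbn [digits horner]; [ring|].
  destruct (N <? p)%nat; cbn [horner]; [ring|].
  assert (HN : INR N = INR (p * (N / p) + N mod p)) by (f_equal; apply Nat.div_mod_eq).
  rewrite plus_INR, !mult_INR in HN.
  rewrite IH, mult_INR, HN, <- Hrq. ring.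
Qed.

Lemma digits_lt (f N : nat) : (N <= f)%nat -> Forall (fun x => x < p)%nat (digits f N).
Proof.
  revert N. induction f as [|f IH]; intros N HN; cbn [digits].
  - constructor; [lia | constructor].
  - destruct (N <? p)%nat eqn:E.
    + apply Nat.ltb_lt in E. constructor; [exact E | constructor].
    + apply Nat.ltb_ge in E. constructor; [apply Nat.mod_upper_bound; lia|].
      apply IH.
      assert (p * (N / p) <= N)%nat by apply Nat.Div0.mul_div_le.
      assert (1 <= N / p)%nat by (apply Nat.div_le_lower_bound; lia).
      nia.
Qed.

Lemma length_digits (j : nat) :
  forall f N, INR N < INR p * r ^ j -> (length (digits f N) <= S j)%nat.
Proof.
  pose proof (one_lt_ratio p q r Hrq Hqp) as Hr.
  induction j as [|j IH]; intros [|f] N HN; cbn [digits]; try (simpl; lia).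
  - destruct (N <? p)%nat eqn:E; simpl; [lia|].
    apply Nat.ltb_ge, le_INR in E. simpl in HN. lra.
  - destruct (N <? p)%nat eqn:E; simpl; [lia|].
    apply le_n_S, IH.
    assert (Hdiv : INR (p * (N / p)) <= INR N) by apply le_INR, Nat.Div0.mul_div_le.
    rewrite !mult_INR, <- Hrq in *. simpl in HN.
    assert (0 < r ^ j) by (apply pow_lt; lra).
    nra.
Qed.

Lemma list_sum_digits_le (j N : nat) :
  INR N < INR p * r ^ j -> (list_sum (digits N N) <= p * S j)%nat.
Proof.
  intro HN. pose proof (length_digits j N N HN).
  pose proof (list_sum_le_mul_length p _ (digits_lt N N (le_n N))). nia.
Qed.

End Digits.

Lemma elasticity_of_extremes (r x : R) (m M : nat) :
  x <> 0 -> (forall l, fact_value r l = x -> (m <= length l <= M)%nat) ->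
  lengths r x (INR m) -> lengths r x (INR M) ->
  elasticity_of r x (INR M / INR m).
Proof.
  intros Hx Hbounds Hm HM. right. split; [exact Hx|].
  exists (INR M), (INR m). repeat split.
  - intros t [l [Hl ->]]. apply le_INR, Hbounds, Hl.
  - intros u Hu. apply Hu, HM.
  - intros t [l [Hl ->]]. apply le_INR, Hbounds, Hl.
  - intros u Hu. apply Hu, Hm.
Qed.

Lemma lengths_horner (r : R) (c : list nat) :
  lengths r (horner r c) (INR (list_sum c)).
Proof.
  exists (expand 0 c). split.
  - rewrite fact_value_expand. simpl. ring.
  - rewrite length_expand. reflexivity.
Qed.

Section Witness.
Variables (p q : nat) (r : R).
Hypothesis Hrq : r * INR q = INR p.
Hypothesis Hcop : Nat.gcd p q = 1%nat.
Hypothesis Hq2 : (2 <= q)%nat.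
Hypothesis Hqp : (q < p)%nat.

Lemma elasticity_set_digit_ratio (j N G : nat) :
  (1 <= G)%nat -> INR N < INR p * r ^ j ->
  elasticity_set r (INR (N + G) / INR (list_sum (digits p q N N) + G)).
Proof.
  intros HG HN.
  pose proof (one_lt_ratio p q r Hrq Hqp) as Hr.
  pose proof (length_digits p q r Hrq Hqp j N N HN) as Hlen.
  set (dmin := pad (S j) (digits p q N N) ++ repeat 1%nat G).
  set (emax := repeat 0%nat j ++ repeat 1%nat G).
  assert (Hval : horner r dmin = horner r (N :: emax)).
  { unfold dmin, emax. rewrite !horner_app, horner_pad, length_pad, horner_digits by assumption.
    cbn [horner]. rewrite horner_app, horner_zeros, repeat_length. simpl. ring. }
  assert (Hsmin : list_sum dmin = (list_sum (digits p q N N) + G)%nat)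
    by (unfold dmin; rewrite list_sum_app, list_sum_pad, list_sum_repeat; lia).
  assert (Hsmax : list_sum (N :: emax) = (N + G)%nat)
    by (unfold emax; change (list_sum (N :: ?l)) with (N + list_sum l)%nat;
        rewrite list_sum_app, !list_sum_repeat; lia).
  exists (horner r dmin). split.
  { exists (expand 0 dmin). rewrite fact_value_expand. simpl. ring. }
  rewrite <- Hsmin, <- Hsmax. apply elasticity_of_extremes.
  - apply Rgt_not_eq, horner_pos; [lra | rewrite Hsmin; lia].
  - intros l Hl. change (list_sum (N :: emax)) with (N + list_sum emax)%nat.
    apply (factorization_length_bounds p q r Hrq Hcop (Nat.lt_le_incl _ _ Hqp));
      [| | exact Hval | exact Hl].
    + unfold dmin, pad. repeat (apply Forall_app; split).
      * apply (digits_lt p q Hqp), le_n.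
      * apply Forall_repeat. lia.
      * apply Forall_repeat. lia.
    + unfold emax. apply Forall_app. split; apply Forall_repeat; lia.
  - apply lengths_horner.
  - rewrite Hval. apply lengths_horner.
Qed.

End Witness.

Lemma nat_floor (x : R) : 0 <= x -> exists n : nat, INR n <= x < INR n + 1.
Proof.
  intro Hx. destruct (base_Int_part x) as [Hlo Hhi].
  assert (Hpos : (0 <= Int_part x)%Z) by (enough (-1 < Int_part x)%Z by lia; apply lt_IZR; lra).
  exists (Z.to_nat (Int_part x)). rewrite INR_IZR_INZ, Z2Nat.id by exact Hpos. lra.
Qed.

Lemma pow_ge_bernoulli (r : R) (k : nat) : 0 <= r -> 1 + INR k * (r - 1) <= r ^ k.
Proof.
  intro Hr. induction k as [|k IH]; [simpl; lra|].
  rewrite S_INR. cbn [pow]. pose proof (pos_INR k).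
  assert (r * (1 + INR k * (r - 1)) <= r * r ^ k) by (apply Rmult_le_compat_l; lra).
  assert (0 <= INR k * ((r - 1) * (r - 1)))
    by (apply Rmult_le_pos; [apply pos_INR | apply Rle_0_sqr]).
  nra.
Qed.

Lemma pow_dominates_linear (r A : R) : 1 < r -> exists j : nat, A * (INR j + 1) < r ^ j.
Proof.
  intro Hr. set (h := r - 1).
  assert (Hh : 0 < h * h) by (unfold h; nra).
  destruct (nat_floor (3 * Rabs A / (h * h))) as [n [_ Hn]].
  { apply Rmult_le_pos; [pose proof (Rabs_pos A); lra | apply Rlt_le, Rinv_0_lt_compat, Hh]. }
  set (k := INR (S n)).
  assert (Hk : 3 * Rabs A < k * (h * h)).
  { unfold k. rewrite S_INR. apply (Rmult_lt_compat_r (h * h)) in Hn; [|exact Hh].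
    unfold Rdiv in Hn. rewrite Rmult_assoc, Rinv_l in Hn; lra. }
  assert (Hk1 : 1 <= k) by (unfold k; rewrite S_INR; pose proof (pos_INR n); lra).
  pose proof (pow_ge_bernoulli r (S n) ltac:(lra)) as Hb. fold k h in Hb.
  exists (2 * S n)%nat.
  rewrite mult_INR. replace (INR 2) with 2 by (simpl; ring). fold k.
  replace (r ^ (2 * S n)) with (r ^ S n * r ^ S n) by (rewrite <- pow_add; f_equal; lia).
  pose proof (Rle_abs A). pose proof (Rabs_pos A).
  assert (0 <= k * h) by (unfold h; nra).
  assert (k * h * (k * h) < r ^ S n * r ^ S n) by nra.
  assert (A * (2 * k + 1) <= Rabs A * (3 * k)) by nra.
  assert (Rabs A * (3 * k) < k * h * (k * h)) by nra.
  lra.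
Qed.

Lemma ratio_close (y eps S0 s G N : R) :
  0 <= y -> 0 <= s <= S0 -> 0 < G -> N <= (y - 1) * G < N + 1 -> y * S0 + 1 < eps * G ->
  Rabs ((N + G) / (s + G) - y) < eps.
Proof.
  intros Hy [Hs0 Hs] HG [HN1 HN2] Heps.
  set (rho := (N + G) / (s + G)).
  assert (Hdiff : (rho - y) * (s + G) = N - (y - 1) * G - y * s) by (unfold rho; field; lra).
  assert (y * s <= y * S0) by (apply Rmult_le_compat_l; lra).
  assert (0 <= y * s) by (apply Rmult_le_pos; lra).
  assert (Heps0 : 0 < eps) by nra.
  assert (0 <= eps * s) by (apply Rmult_le_pos; lra).
  assert (Hup : (rho - y) * (s + G) <= 0) by (rewrite Hdiff; lra).
  assert (Hlo : 0 < (rho - y + eps) * (s + G)) by (rewrite Rmult_plus_distr_r, Hdiff; lra).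
  apply Rabs_def1; nra.
Qed.

Lemma approximation_parameters (p : nat) (r y eps : R) :
  (0 < p)%nat -> 1 < r -> 1 <= y -> 0 < eps ->
  exists j N G : nat, (1 <= G)%nat /\ INR N < INR p * r ^ j /\
    forall s : nat, (s <= p * S j)%nat -> Rabs (INR (N + G) / INR (s + G) - y) < eps.
Proof.
  intros Hp Hr Hy Heps. apply lt_0_INR in Hp.
  (* [A] is chosen so that [(y - 1) * (K + 1) <= INR p * A * (INR j + 1)] below,
     which bounds [N] by [INR p * r ^ j]. *)
  set (A := (y - 1) * (y * INR p + 1 + eps) / (eps * INR p)).
  destruct (pow_dominates_linear r A Hr) as [j Hj].
  assert (Hj0 : 0 <= INR j) by apply pos_INR.
  set (S0 := INR p * (INR j + 1)).
  assert (HyS0 : 0 <= y * S0) by (unfold S0; apply Rmult_le_pos; [|apply Rmult_le_pos]; lra).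
  set (K := (y * S0 + 1) / eps).
  destruct (nat_floor K) as [G0 HG0].
  { unfold K. apply Rmult_le_pos; [lra | apply Rlt_le, Rinv_0_lt_compat, Heps]. }
  set (G := S G0).
  assert (HG : INR G = INR G0 + 1) by apply S_INR.
  destruct (nat_floor ((y - 1) * INR G)) as [N HN]; [pose proof (pos_INR G0); nra|].
  assert (HKe : K * eps = y * S0 + 1) by (unfold K; field; lra).
  exists j, N, G. split; [unfold G; lia|]. split.
  - assert (HAe : A * INR p * eps = (y - 1) * (y * INR p + 1 + eps)) by (unfold A; field; lra).
    assert (Hbound : (y - 1) * (K + 1) * eps <= A * INR p * (INR j + 1) * eps).
    { replace ((y - 1) * (K + 1) * eps) with ((y - 1) * (K * eps + eps)) by ring.
      replace (A * INR p * (INR j + 1) * eps) with (A * INR p * eps * (INR j + 1)) by ring.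
      rewrite HKe, HAe. unfold S0.
      assert (0 <= (y - 1) * (1 + eps) * INR j) by (repeat apply Rmult_le_pos; lra).
      nra. }
    assert ((y - 1) * INR G <= (y - 1) * (K + 1)) by (apply Rmult_le_compat_l; lra).
    assert ((y - 1) * (K + 1) <= A * INR p * (INR j + 1))
      by (apply (Rmult_le_reg_r eps); assumption).
    nra.
  - intros s Hs. apply le_INR in Hs. rewrite mult_INR, S_INR in Hs. rewrite !plus_INR.
    apply ratio_close with (S0 := S0).
    + lra.
    + split; [apply pos_INR | exact Hs].
    + pose proof (pos_INR G0). lra.
    + exact HN.
    + rewrite <- HKe, (Rmult_comm eps). apply Rmult_lt_compat_r; lra.
Qed.

Lemma rat_lowest_terms (a b : nat) :
  (0 < b)%nat -> exists p q : nat, Nat.gcd p q = 1%nat /\ INR a / INR b * INR q = INR p.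
Proof.
  intro Hb. set (g := Nat.gcd a b).
  assert (Hg : g <> 0%nat) by (intro H; apply Nat.gcd_eq_0 in H; lia).
  destruct (Nat.gcd_divide_l a b) as [p Hp], (Nat.gcd_divide_r a b) as [q Hq]. fold g in Hp, Hq.
  exists p, q. split.
  - pose proof (Nat.gcd_div_gcd a b g Hg eq_refl) as Hcop.
    rewrite Hp, Hq, !Nat.div_mul in Hcop by exact Hg. exact Hcop.
  - assert (Hq0 : INR q <> 0) by (apply not_0_INR; intro; subst q; lia).
    assert (Hg0 : INR g <> 0) by (apply not_0_INR, Hg).
    rewrite Hp, Hq, !mult_INR. field. split; assumption.
Qed.

Lemma denominator_bounds (p q : nat) (r : R) :
  r * INR q = INR p -> Nat.gcd p q = 1%nat -> 1 < r -> (forall n : nat, r <> INR n) ->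
  (2 <= q < p)%nat.
Proof.
  intros Hrq Hcop Hr Hnat.
  destruct q as [|[|q]].
  - rewrite Rmult_0_r in Hrq. replace p with 0%nat in Hcop by (apply INR_eq; simpl; lra).
    discriminate.
  - exfalso. apply (Hnat p). rewrite <- Hrq. simpl. ring.
  - split; [lia|]. apply INR_lt. rewrite <- Hrq.
    pose proof (lt_0_INR (S (S q)) ltac:(lia)). nra.
Qed.

Theorem proposition4p5 (r : R)
  (hrat : exists p q : nat, (0 < q)%nat /\ r = INR p / INR q)
  (hr1 : 1 < r) (hnat : forall n : nat, r <> INR n) :
  forall y eps : R, 1 <= y -> 0 < eps ->
    exists rho : R, elasticity_set r rho /\ Rabs (rho - y) < eps.
Proof.
  intros y eps Hy Heps.
  destruct hrat as [a [b [Hb Hr]]].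
  destruct (rat_lowest_terms a b Hb) as [p [q [Hcop Hrq]]]. rewrite <- Hr in Hrq.
  destruct (denominator_bounds p q r Hrq Hcop hr1 hnat) as [Hq2 Hqp].
  destruct (approximation_parameters p r y eps ltac:(lia) hr1 Hy Heps)
    as [j [N [G [HG [HN Hclose]]]]].
  exists (INR (N + G) / INR (list_sum (digits p q N N) + G)). split.
  - exact (elasticity_set_digit_ratio p q r Hrq Hcop Hq2 Hqp j N G HG HN).
  - apply Hclose, (list_sum_digits_le p q r Hrq Hqp j N HN).
Qed.
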